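(* Let $T$ be a finite set of students and $S$ a finite set of schools, each school having capacity $q\ge 1$, with $|T|\le q|S|$. Each student $t$ has a strict preference order $\succ_t$ over $S$ (every school is preferred to being unmatched), and each school $s$ has a strict priority order $\rhd_s$ over $T$. Let $\mu^\Omega$ denote the student-optimal stable matching of the whole market $T\cup S$. Let $\mathcal{D}'=\{D'_1,\dots,D'_{r'}\}$ be a partition of $T\cup S$ into parts $D'_i$, each containing at least one student and at least one school, with $T^{D'_i}=T\cap D'_i$ and $S^{D'_i}=S\cap D'_i$, such that for every $i\in\{1,\dots,r'\}$: if $t\in T^{D'_i}$ and $\mu^\Omega(t)=s$ for a school $s$, then $s\in S^{D'_i}$. For each $i$, let $\mu^{D'_i}$ denote the student-optimal stable matching of the sub-market consisting of the students $T^{D'_i}$ and schools $S^{D'_i}$ (with the preferences and priorities restricted to this sub-market), and for $t\in T^{D'_i}$ write $\mu^{D'}(t)=\mu^{D'_i}(t)$. Then for every student $t\in T$, $\mu^{D'}(t)\succcurlyeq_t \mu^\Omega(t)$, where $a\succcurlyeq_t b$ means $a\succ_t b$ or $a=b$.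
   Context: A matching of a population with students $T^P$ and schools $S^P$ is a correspondence $\mu$ with $\mu(t)\in S^P\cup\{t\}$ for each student ($\mu(t)=t$ meaning unmatched), $\mu(s)\subseteq T^P$ with $|\mu(s)|\le q$, and $\mu(t)=s$ iff $t\in\mu(s)$. Each school's choice rule is responsive to its priority order (it admits its highest-priority applicants up to capacity). A matching is stable if there is no pair $(t,s)$ with either (i) $\mu(t)=t$ and $|\mu(s)|<q$, or (ii) $s\succ_t\mu(t)$ and $t\rhd_s t'$ for some $t'\in\mu(s)$. The student-optimal stable matching is the stable matching that every student weakly prefers to every other stable matching (it exists and is computed by student-proposing deferred acceptance). *)

From mathcomp Require Import all_boot.
Set Implicit Arguments. Unset Strict Implicit. Unset Printing Implicit Defensive.

(* Strict orders are encoded by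
   injective rank functions (smaller rank = more preferred):
     rank t : S -> nat   is student t's strict preference  (s >_t s'  iff rank t s < rank t s')
     prio s : T -> nat   is school s's strict priority     (t |>_s t' iff prio s t < prio s t')
   A matching is  mu : T -> option S,  None meaning "unmatched"; every school
   is preferred to being unmatched. *)

Section Market.
Variables (T S : finType) (q : nat) (rank : T -> S -> nat) (prio : S -> T -> nat).

Definition sprefer (t : T) (a b : option S) : bool :=
  match a, b with
  | Some x, Some y => rank t x < rank t y
  | Some _, None => true
  | None, _ => false
  end.

Definition wprefer (t : T) (a b : option S) : bool :=
  sprefer t a b || (a == b).

Definition assigned (mu : T -> option S) (s : S) : {set T} :=
  [set t | mu t == Some s].

Definition is_matching (D : {set T}) (E : {set S}) (mu : T -> option S) : Prop :=
  [/\ forall t, t \notin D -> mu t = None,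
      forall t s, mu t = Some s -> s \in E &
      forall s, #|assigned mu s| <= q].

Definition blocks (mu : T -> option S) (t : T) (s : S) : Prop :=
  (mu t = None /\ #|assigned mu s| < q) \/
  (sprefer t (Some s) (mu t) /\ exists t', mu t' = Some s /\ prio s t < prio s t').

Definition is_stable (D : {set T}) (E : {set S}) (mu : T -> option S) : Prop :=
  is_matching D E mu /\
  forall t s, t \in D -> s \in E -> ~ blocks mu t s.

Definition student_optimal_stable (D : {set T}) (E : {set S})
    (mu : T -> option S) : Prop :=
  is_stable D E mu /\
  forall nu, is_stable D E nu -> forall t, t \in D -> wprefer t (mu t) (nu t).

End Market.

From mathcomp Require Import all_boot.
Set Implicit Arguments. Unset Strict Implicit. Unset Printing Implicit Defensive.

(* Restricting mu^Omega to the students of a part D'_i gives a stable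
   matching of the sub-market D'_i: since mu^Omega pairs students and schools
   only within parts, the restriction sees the same assignments at every
   school of D'_i, so a blocking pair for it would block mu^Omega itself.
   Student-optimality of mu^{D'_i} then compares it favourably with this
   restriction. *)

Section Restriction.
Variables (T S : finType) (q : nat) (rank : T -> S -> nat) (prio : S -> T -> nat).

Definition restrict (D : {set T}) (mu : T -> option S) (t : T) : option S :=
  if t \in D then mu t else None.

Lemma restrict_in (D : {set T}) (mu : T -> option S) t :
  t \in D -> restrict D mu t = mu t.
Proof. by rewrite /restrict => ->. Qed.

Lemma restrict_Some (D : {set T}) (mu : T -> option S) t s :
  restrict D mu t = Some s -> t \in D /\ mu t = Some s.
Proof. by rewrite /restrict; case: ifP. Qed.

Lemma assigned_restrict (D : {set T}) (mu : T -> option S) s :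
  assigned (restrict D mu) s = assigned mu s :&: D.
Proof.
apply/setP => t; rewrite !inE /restrict.
by case: (t \in D); rewrite ?andbT ?andbF.
Qed.

Variables (D0 D : {set T}) (E0 E : {set S}) (mu : T -> option S).
Hypotheses (sub_D : D \subset D0) (sub_E : E \subset E0).
Hypothesis closed_mu : forall t s, mu t = Some s -> (s \in E) = (t \in D).

Lemma assigned_restrict_closed s :
  s \in E -> assigned (restrict D mu) s = assigned mu s.
Proof.
move=> sE; rewrite assigned_restrict; apply/setIidPl/subsetP => t.
by rewrite inE => /eqP /closed_mu <-.
Qed.

Lemma restrict_stable :
  is_stable q rank prio D0 E0 mu -> is_stable q rank prio D E (restrict D mu).
Proof.
case=> [[_ _ cap_mu] nonblock_mu]; split; first split.
- by move=> t /negbTE; rewrite /restrict => ->.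
- by move=> t s /restrict_Some [tD mts]; rewrite (closed_mu mts).
- by move=> s; rewrite assigned_restrict (leq_trans (subset_leq_card (subsetIl _ _))).
move=> t s tD sE blk; apply: (nonblock_mu t s (subsetP sub_D t tD) (subsetP sub_E s sE)).
rewrite /blocks -(restrict_in mu tD) -(assigned_restrict_closed sE).
case: blk => [|[pref [t' [/restrict_Some [_ mt's] lt]]]]; first by left.
by right; split=> //; exists t'.
Qed.

Lemma student_optimal_restrict nu :
  student_optimal_stable q rank prio D E nu -> is_stable q rank prio D0 E0 mu ->
  forall t, t \in D -> wprefer rank t (nu t) (mu t).
Proof.
move=> [_ opt_nu] /restrict_stable stab t tD.
by rewrite -(restrict_in mu tD); apply: opt_nu.
Qed.

End Restriction.

Theorem proposition1
  (T S : finType) (q : nat) (rank : T -> S -> nat) (prio : S -> T -> nat)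
  (hq : 1 <= q) (hcard : #|T| <= q * #|S|)
  (hrank : forall t, injective (rank t))
  (hprio : forall s, injective (prio s))
  (muO : T -> option S)
  (hmuO : student_optimal_stable q rank prio [set: T] [set: S] muO)
  (r : nat) (partT : T -> 'I_r) (partS : S -> 'I_r)
  (hpartT : forall i : 'I_r, exists t, partT t = i)
  (hpartS : forall i : 'I_r, exists s, partS s = i)
  (hcompat : forall t s, muO t = Some s -> partS s = partT t)
  (muD : 'I_r -> T -> option S)
  (hmuD : forall i : 'I_r,
     student_optimal_stable q rank prio
       [set t | partT t == i] [set s | partS s == i] (muD i)) :
  forall t : T, wprefer rank t (muD (partT t) t) (muO t).
Proof.
move=> t.
have closed_parts i t' s :
  muO t' = Some s -> (s \in [set s | partS s == i]) = (t' \in [set t | partT t == i]).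
  by move/hcompat; rewrite !inE => ->.
apply: (student_optimal_restrict (subsetT _) (subsetT _) (closed_parts (partT t))
          (hmuD (partT t)) hmuO.1).
by rewrite inE.
Qed.
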